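(* Let $H$ be a homogeneous elliptic operator of order $2m$ with real constant coefficients on $\mathbb{R}^n$ and let $\Omega\subseteq\mathbb{R}^n$ be an open convex set with nonempty boundary. Then for every $x\in\Omega$, $$\int_{S^{n-1}}\frac{d\sigma(\omega)}{\big(F_H^*(\omega)\,d_\omega(x)\big)^{2m}}\ \ge\ \frac{\mu_H}{d_H^{2m}(x)}.$$
   Context: $H$ has symbol $H(\xi)=\sum_{|\alpha|=2m}a_\alpha\xi^\alpha$, real $a_\alpha$, $H(\xi)>0$ for $\xi\ne0$. $F_H(\xi)=H(\xi)^{1/(2m)}$, $F_H^*(\omega)=\sup_{\xi\neq0}\frac{\omega\cdot\xi}{F_H(\xi)}$, $F_H^{**}(\xi)=\sup_{\omega\neq0}\frac{\xi\cdot\omega}{F_H^*(\omega)}$. $d_\omega(x)=\inf\{|s|:x+s\omega\notin\Omega\}$ and $d_H(x)=\min\{F_H^*(x-y):y\in\partial\Omega\}$. $d\sigma$ is the normalized surface measure on $S^{n-1}$, and $\mu_H$ is the largest constant such that $\mu_H F_H^{**}(\xi)^{2m}\le\int_{S^{n-1}}\frac{(\xi\cdot\omega)^{2m}}{F_H^*(\omega)^{2m}}d\sigma(\omega)$ for all $\xi\in\mathbb{R}^n$. *)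

From HB Require Import structures.
From mathcomp Require Import all_boot all_order all_algebra.
From mathcomp Require Import all_classical all_reals all_analysis.
Set Implicit Arguments. Unset Strict Implicit. Unset Printing Implicit Defensive.
Import Order.TTheory GRing.Theory Num.Theory.
Import numFieldNormedType.Exports.
Local Open Scope classical_set_scope.
Local Open Scope ring_scope.

Section Defs.
Variable R : realType.
Variable n : nat.
Implicit Types (x y xi om : 'rV[R]_n) (A : set 'rV[R]_n).

Definition dotp x y : R := \sum_(i < n) x ord0 i * y ord0 i.
Definition enorm x : R := Num.sqrt (dotp x x).

Definition sphere : set 'rV[R]_n := [set om | enorm om = 1].
Definition ball1 : set 'rV[R]_n := [set x | enorm x <= 1].

(* multi-indices alpha with |alpha| = 2m (entries bounded by 2m) *)
Definition multiidx (m : nat) := {ffun 'I_n -> 'I_(2 * m).+1}.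

Definition Hsym (m : nat) (a : multiidx m -> R) xi : R :=
  \sum_(al : multiidx m | (\sum_(i < n) (al i : nat) == 2 * m)%N)
     a al * \prod_(i < n) xi ord0 i ^+ (al i : nat).

Definition FH m (a : multiidx m -> R) xi : R := powR (Hsym a xi) ((2 * m)%:R)^-1.

Definition FHstar m (a : multiidx m -> R) om : R :=
  sup [set dotp om xi / FH a xi | xi in [set xi | xi != 0]].

Definition FHstarstar m (a : multiidx m -> R) xi : R :=
  sup [set dotp xi om / FHstar a om | om in [set om | om != 0]].

(* Iterated Lebesgue integral over R^k of a nonnegative extended function of
   the coordinates (Tonelli: equals the Lebesgue integral on R^k). *)
Fixpoint iter_int (k : nat) (f : (nat -> R) -> \bar R) : \bar R :=
  match k with
  | 0 => f (fun _ => 0)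
  | k'.+1 => (\int[@lebesgue_measure R]_(t in [set: R])
                iter_int k' (fun v => f (fun i => if i == k' then t else v i)))%E
  end.

Definition leb_int (F : 'rV[R]_n -> \bar R) : \bar R :=
  iter_int n (fun v => F (\row_(i < n) v i)).

Definition vol_ball : \bar R := leb_int (fun x => (\1_ball1 x)%:E).

(* Integral over S^{n-1} w.r.t. the normalized surface measure d sigma,
   via the cone formula: int_S f dsigma = |B|^{-1} int_B f(x/|x|) dx. *)
Definition sphere_int (f : 'rV[R]_n -> \bar R) : \bar R :=
  (leb_int (fun x => (\1_ball1 x)%:E * f ((enorm x)^-1 *: x)) * (fine vol_ball)^-1%:E)%E.

Definition muH m (a : multiidx m -> R) : R :=
  sup [set c : R | forall xi,
        ((c * FHstarstar a xi ^+ (2 * m))%:E <=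
         sphere_int (fun om => (dotp xi om ^+ (2 * m) / FHstar a om ^+ (2 * m))%:E))%E].

Definition bdry A : set 'rV[R]_n := closure A `&` closure (~` A).

(* d_om(x) = inf{|s| : x + s om notin Omega}  (+oo if the set is empty) *)
Definition d_dir A x om : \bar R :=
  ereal_inf [set (`|s|)%:E | s in [set s : R | ~ A (x + s *: om)]].

Definition dH m (a : multiidx m -> R) A x : R :=
  inf [set FHstar a (x - y) | y in bdry A].

Definition integrand m (a : multiidx m -> R) A x om : \bar R :=
  match d_dir A x om with
  | EFin r => ((FHstar a om * r) ^+ (2 * m))^-1%:E
  | _ => 0%E
  end.

End Defs.

(* Fix x in the open convex set Omega and a boundary point y.  By Hahn-Banach
   applied to the Minkowski gauge of Omega - x, there is a supporting hyperplane:
   a vector nu with nu.(y - x) = 1 and nu.(z - x) < 1 on Omega.  Then along each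
   direction w the line x + s w leaves Omega at s = 1 / nu.w, so
   d_w(x) <= 1 / |nu.w| and the integrand dominates (nu.w)^(2m) / F_H^*(w)^(2m).
   Integrating and using the definition of mu_H with xi = -nu, together with
   F_H^**(xi) >= xi.(x - y) / F_H^*(x - y) = 1 / F_H^*(x - y), gives
   mu_H <= J F_H^*(x - y)^(2m), J being the integral.  Taking the infimum over y
   yields the theorem. *)
From HB Require Import structures.
From mathcomp Require Import all_boot all_order all_algebra.
From mathcomp Require Import all_classical all_reals all_analysis.
From mathcomp Require Import lra.
Set Implicit Arguments. Unset Strict Implicit. Unset Printing Implicit Defensive.
Import Order.TTheory GRing.Theory Num.Theory.
Import numFieldNormedType.Exports.
Local Open Scope classical_set_scope.
Local Open Scope ring_scope.

Section DotProduct.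
Variables (R : realType) (n : nat).
Implicit Types (u v w : 'rV[R]_n).

Lemma dotpZr w t u : dotp w (t *: u) = t * dotp w u.
Proof. by rewrite /dotp mulr_sumr; apply: eq_bigr => i _; rewrite mxE mulrCA. Qed.

Lemma dotpNl w u : dotp (- w) u = - dotp w u.
Proof. by rewrite /dotp -sumrN; apply: eq_bigr => i _; rewrite mxE mulNr. Qed.

Lemma dotpNr w u : dotp w (- u) = - dotp w u.
Proof. by rewrite -scaleN1r dotpZr mulN1r. Qed.

Lemma dotp0r w : dotp w 0 = 0.
Proof. by rewrite -(scale0r 0) dotpZr mul0r. Qed.

Lemma dotp_ge0 u : 0 <= dotp u u.
Proof. by apply: sumr_ge0 => i _; rewrite -expr2 sqr_ge0. Qed.

Lemma coord_le_norm u i : `|u ord0 i| <= Num.sqrt (dotp u u).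
Proof.
rewrite -sqrtr_sqr ler_sqrt ?dotp_ge0 // /dotp (bigD1 i) //= expr2 lerDl.
by apply: sumr_ge0 => j _; rewrite -expr2 sqr_ge0.
Qed.

Lemma dotp_gt0 u : u != 0 -> 0 < dotp u u.
Proof.
move=> u0; rewrite lt_def dotp_ge0 andbT; apply: contra u0 => /eqP uu0.
apply/eqP/rowP => i; rewrite mxE; apply/eqP; rewrite -normr_eq0 eq_le normr_ge0 andbT.
by have := coord_le_norm u i; rewrite uu0 sqrtr0.
Qed.

Lemma dotp_le_norm w u : `|dotp w u| <= (\sum_i `|w ord0 i|) * Num.sqrt (dotp u u).
Proof.
rewrite mulr_suml; apply: le_trans (ler_norm_sum _ _ _) _; apply: ler_sum => i _.
by rewrite normrM ler_wpM2l ?coord_le_norm.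
Qed.

Lemma linear_dotp (g : 'rV[R]_n -> R) :
  (forall u v, g (u + v) = g u + g v) -> (forall t u, g (t *: u) = t * g u) ->
  forall z, g z = dotp (\row_j g 'e_j) z.
Proof.
move=> gD gZ z; have g0 : g 0 = 0 by rewrite -(scale0r 0) gZ mul0r.
rewrite {1}(row_sum_delta z) (big_morph g gD g0) /dotp.
by apply: eq_bigr => j _; rewrite gZ mxE mulrC.
Qed.
End DotProduct.

(* The algebraic Hahn-Banach theorem, in the form needed for finite-dimensional
   spaces: a linear functional dominated by a sublinear [p] on a subspace [S]
   extends, with the same domination, to [S + R e]; iterating along a finite list
   of vectors reaches the whole space when the list spans it. *)
Section HahnBanach.
Variables (R : realType) (V : lmodType R) (p : V -> R).
Hypothesis pD : forall u v, p (u + v) <= p u + p v.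
Hypothesis pZ : forall (t : R) u, 0 < t -> p (t *: u) = t * p u.

Definition subspace (S : set V) := S 0 /\ (forall u v, S u -> S v -> S (u + v)) /\
  (forall (t : R) u, S u -> S (t *: u)).

Definition linear_on (S : set V) (f : V -> R) :=
  (forall u v, S u -> S v -> f (u + v) = f u + f v) /\
  (forall (t : R) u, S u -> f (t *: u) = t * f u).

Definition adjoin (S : set V) (e : V) := [set u | exists v t, S v /\ u = v + t *: e].

Lemma adjoin_subspace S e : subspace S -> subspace (adjoin S e).
Proof.
move=> [S0 [SD SZ]]; split; first by exists 0, 0; rewrite scale0r addr0.
split.
  move=> _ _ [v [t [Sv ->]]] [v' [t' [Sv' ->]]]; exists (v + v'), (t + t').
  by split; [exact: SD | rewrite scalerDl addrACA].
move=> s _ [v [t [Sv ->]]]; exists (s *: v), (s * t); split; first exact: SZ.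
by rewrite scalerDr scalerA.
Qed.

Lemma sub_adjoin S e : S `<=` adjoin S e.
Proof. by move=> u Su; exists u, 0; rewrite scale0r addr0. Qed.

Lemma adjoin_mem S e : subspace S -> adjoin S e e.
Proof. by move=> [S0 _]; exists 0, 1; rewrite scale1r add0r. Qed.

Lemma adjoin_coef_unique S e u t t' : subspace S -> ~ S e ->
  S (u - t *: e) -> S (u - t' *: e) -> t = t'.
Proof.
move=> [_ [SD SZ]] nSe St St'; apply/eqP; apply/negPn/negP => tt'; apply: nSe.
have : S ((u - t' *: e) + (-1) *: (u - t *: e)) by apply: SD => //; exact: SZ.
rewrite scaleN1r opprB addrC addrA subrK -scalerBl => /(SZ ((t - t')^-1)).
by rewrite scalerA mulVf ?scale1r // subr_eq0.
Qed.

Lemma extension_dominated S f e c : linear_on S f ->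
  (forall v, S v -> f v <= p v) ->
  (forall v, S v -> f v - p (v - e) <= c) ->
  (forall v, S v -> c <= p (v + e) - f v) ->
  subspace S -> forall v t, S v -> f v + t * c <= p (v + t *: e).
Proof.
move=> [_ fZ] fp cl cu [_ [_ SZ]] v t Sv.
have [t0|t0|->] := ltgtP t 0; last by rewrite mul0r addr0 scale0r addr0; exact: fp.
- have := cl ((- t)^-1 *: v) (SZ _ _ Sv); rewrite fZ //.
  have -> : (- t)^-1 *: v - e = (- t)^-1 *: (v + t *: e).
    by rewrite scalerDr scalerA invrN mulNr mulVf ?lt_eqF // scaleN1r.
  rewrite pZ ?invr_gt0 ?oppr_gt0 // -mulrBr => h.
  rewrite -(ler_pM2l (_ : 0 < - t)) ?oppr_gt0 // mulrA mulfV ?oppr_eq0 ?lt_eqF // mul1r in h.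
  lra.
- have := cu (t^-1 *: v) (SZ _ _ Sv); rewrite fZ //.
  have -> : t^-1 *: v + e = t^-1 *: (v + t *: e).
    by rewrite scalerDr scalerA mulVf ?gt_eqF // scale1r.
  rewrite pZ ?invr_gt0 // -mulrBr => h.
  rewrite -(ler_pM2l t0) mulrA mulfV ?gt_eqF // mul1r in h.
  lra.
Qed.

Lemma extend_with_value S f e c : subspace S -> linear_on S f -> ~ S e ->
  (forall v, S v -> f v <= p v) ->
  (forall v, S v -> f v - p (v - e) <= c) ->
  (forall v, S v -> c <= p (v + e) - f v) ->
  exists g, [/\ linear_on (adjoin S e) g, (forall u, S u -> g u = f u), g e = c &
    forall u, adjoin S e u -> g u <= p u].
Proof.
move=> sS lf nSe fp cl cu; have [S0 [SD SZ]] := sS; have [fD fZ] := lf.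
pose coef u := xget 0 [set t : R | S (u - t *: e)].
have coefE v t : S v -> coef (v + t *: e) = t.
  move=> Sv; have St : S (v + t *: e - t *: e) by rewrite addrK.
  apply: (adjoin_coef_unique sS nSe _ St).
  by apply: (xgetPex 0 (P := [set s : R | S (v + t *: e - s *: e)])); exists t.
pose g u := f (u - coef u *: e) + coef u * c.
have gE v t : S v -> g (v + t *: e) = f v + t * c by move=> Sv; rewrite /g coefE ?addrK.
have f0 : f 0 = 0 by rewrite -(scale0r 0) fZ // mul0r.
exists g; split.
- split.
    move=> _ _ [v [t [Sv ->]]] [v' [t' [Sv' ->]]].
    rewrite addrACA -scalerDl !gE //; last exact: SD.
    by rewrite fD // mulrDl addrACA.
  move=> s _ [v [t [Sv ->]]]; rewrite scalerDr scalerA !gE //; last exact: SZ.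
  by rewrite fZ // mulrDr mulrA.
- by move=> u Su; have := gE u 0 Su; rewrite scale0r addr0 mul0r addr0.
- by have := gE 0 1 S0; rewrite scale1r add0r f0 mul1r add0r.
- by move=> _ [v [t [Sv ->]]]; rewrite gE //; exact: (extension_dominated lf fp cl cu sS).
Qed.

(* One extension step, the admissible value being a supremum. *)
Lemma extend_one S f e : subspace S -> linear_on S f -> (forall v, S v -> f v <= p v) ->
  exists g, [/\ linear_on (adjoin S e) g, (forall u, S u -> g u = f u) &
    forall u, adjoin S e u -> g u <= p u].
Proof.
move=> sS lf fp; have [S0 [SD SZ]] := sS; have [fD fZ] := lf.
have [Se|nSe] := pselect (S e).
  have sub : adjoin S e `<=` S by move=> _ [v [t [Sv ->]]]; apply: SD => //; exact: SZ.
  exists f; split => //; last by move=> u /sub; exact: fp.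
  by split => [u v /sub Su /sub Sv|t u /sub Su]; [exact: fD | exact: fZ].
have sep v v' : S v -> S v' -> f v - p (v - e) <= p (v' + e) - f v'.
  move=> Sv Sv'; have := fp _ (SD _ _ Sv Sv'); rewrite fD // => h1.
  have := pD (v - e) (v' + e); rewrite addrACA addNr addr0 => h2; lra.
pose A := [set f v - p (v - e) | v in S].
have [g [lg gf _ gp]] : exists g, [/\ linear_on (adjoin S e) g,
    (forall u, S u -> g u = f u), g e = sup A & forall u, adjoin S e u -> g u <= p u].
  apply: extend_with_value => // v Sv.
    apply: ub_le_sup; last by exists v.
    by exists (p (0 + e) - f 0) => _ [v' Sv' <-]; exact: sep.
  apply: ge_sup; first by exists (f 0 - p (0 - e)), 0.
  by move=> _ [v' Sv' <-]; exact: sep.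
by exists g.
Qed.

Definition adjoin_all (S : set V) (es : seq V) := foldl adjoin S es.

Lemma adjoin_all_subspace es S : subspace S -> subspace (adjoin_all S es).
Proof. by elim: es S => [|e es IH] S sS //=; apply: IH; exact: adjoin_subspace. Qed.

Lemma sub_adjoin_all es S : S `<=` adjoin_all S es.
Proof. by elim: es S => [|e es IH] S //= u Su; apply: IH; exact: sub_adjoin. Qed.

Lemma adjoin_all_mem es S e : subspace S -> e \in es -> adjoin_all S es e.
Proof.
elim: es S => [|e' es IH] S sS //=; rewrite in_cons => /orP[/eqP->|ees].
  by apply: sub_adjoin_all; exact: adjoin_mem.
by apply: IH => //; exact: adjoin_subspace.
Qed.

Lemma extend_all es S f : subspace S -> linear_on S f -> (forall v, S v -> f v <= p v) ->
  exists g, [/\ linear_on (adjoin_all S es) g, (forall u, S u -> g u = f u) &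
    forall u, adjoin_all S es u -> g u <= p u].
Proof.
elim: es S f => [|e es IH] S f sS lf fp /=; first by exists f.
have [g [lg gf gp]] := extend_one e sS lf fp.
have [h [lh hg hp]] := IH _ _ (adjoin_subspace e sS) lg gp.
by exists h; split => // u Su; rewrite hg ?gf //; exact: sub_adjoin.
Qed.

End HahnBanach.
Arguments subspace {R V}.
Arguments linear_on {R V}.
Arguments adjoin {R V}.
Arguments adjoin_all {R V}.

Section Gauge.
Variables (R : realType) (V : normedModType R) (U : set V).
Hypothesis U_open : forall u, U u -> exists2 e : R, 0 < e & forall y, `|u - y| < e -> U y.
Hypothesis U_convex : forall a b (l : R), 0 <= l -> l <= 1 -> U a -> U b ->
  U (l *: a + (1 - l) *: b).
Hypothesis U0 : U 0.

Definition gauge_set (u : V) := [set t : R | 0 < t /\ U (t^-1 *: u)].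
Definition gauge (u : V) := inf (gauge_set u).

Lemma gauge_set_neq0 u : gauge_set u !=set0.
Proof.
have [e e0 He] := U_open U0.
have u1 : 0 < `|u| + 1 by rewrite ltr_pwDr.
exists ((`|u| + 1) / e); split; first exact: divr_gt0.
apply: He; rewrite sub0r normrN normrZ invf_div ger0_norm ?divr_ge0 ?ltW //.
rewrite mulrAC ltr_pdivrMr // ltr_pM2l //; lra.
Qed.

Lemma gauge_ge0 u : 0 <= gauge u.
Proof. by apply: lb_le_inf; [exact: gauge_set_neq0 | move=> t [/ltW]]. Qed.

Lemma gauge_le u t : gauge_set u t -> gauge u <= t.
Proof. by move=> h; apply: ge_inf => //; exists 0 => s [/ltW]. Qed.

Lemma gaugeZ_le (t : R) u : 0 < t -> gauge (t *: u) <= t * gauge u.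
Proof.
move=> t0; rewrite -ler_pdivrMl //; apply: lb_le_inf; first exact: gauge_set_neq0.
move=> s [s0 Us]; rewrite ler_pdivrMl //; apply: gauge_le; split; first exact: mulr_gt0.
by rewrite scalerA invfM mulrAC mulVf ?gt_eqF // mul1r.
Qed.

Lemma gaugeZ (t : R) u : 0 < t -> gauge (t *: u) = t * gauge u.
Proof.
move=> t0; apply/eqP; rewrite eq_le gaugeZ_le //=.
have := gaugeZ_le (t *: u) (_ : 0 < t^-1); rewrite invr_gt0 => /(_ t0).
by rewrite scalerA mulVf ?gt_eqF // scale1r -ler_pdivrMl ?invr_gt0 // invrK.
Qed.

(* Subadditivity follows from convexity: u/a, v/b in U give (u+v)/(a+b) in U. *)
Lemma gaugeD u v : gauge (u + v) <= gauge u + gauge v.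
Proof.
have key a b : gauge_set u a -> gauge_set v b -> gauge (u + v) <= a + b.
  move=> [a0 Ua] [b0 Ub]; apply: gauge_le; split; first exact: addr_gt0.
  have ab0 : 0 < a + b := addr_gt0 a0 b0.
  have := U_convex (l := a / (a + b)) _ _ Ua Ub.
  have -> : 1 - a / (a + b) = b / (a + b).
    by rewrite -{1}(mulfV (lt0r_neq0 ab0)) -mulrBl (addrC a b) addrK.
  rewrite !scalerA [X in X *: u]mulrAC [X in X *: v]mulrAC !mulfV ?gt_eqF //.
  rewrite !mul1r -scalerDr; apply; first by rewrite divr_ge0 // ltW.
  by rewrite ler_pdivrMr // mul1r lerDl ltW.
rewrite -lerBlDr; apply: lb_le_inf; first exact: gauge_set_neq0.
move=> a Ea; rewrite lerBlDr -lerBlDl; apply: lb_le_inf; first exact: gauge_set_neq0.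
by move=> b Eb; rewrite lerBlDl; exact: key.
Qed.

Lemma gauge_out w : ~ U w -> 1 <= gauge w.
Proof.
move=> Uw; apply: lb_le_inf; first exact: gauge_set_neq0.
move=> s [s0 Us]; rewrite leNgt; apply/negP => s1; apply: Uw.
have := U_convex (l := s) (ltW s0) (ltW s1) Us U0.
by rewrite scalerA mulfV ?gt_eqF // scale1r scaler0 addr0.
Qed.

(* Openness: a point of [U] can be pushed out by a factor 1 + d staying in [U]. *)
Lemma gauge_in v : U v -> gauge v < 1.
Proof.
move=> Uv; have [e e0 He] := U_open Uv.
pose d := e / (`|v| + 1).
have d0 : 0 < d by rewrite divr_gt0 // ltr_pwDr.
apply: (@le_lt_trans _ _ (1 + d)^-1).
  apply: gauge_le; split; first by rewrite invr_gt0 ltr_pwDr.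
  rewrite invrK; apply: He; rewrite scalerDl scale1r opprD addrA subrr sub0r normrN.
  rewrite normrZ ger0_norm ?ltW // /d mulrAC ltr_pdivrMr ?ltr_pwDr // ltr_pM2l //; lra.
by rewrite invf_lt1 ?ltr_pwDr // ltrDl.
Qed.

End Gauge.

Section Separation.
Variables (R : realType) (n : nat).

Lemma hahn_banach_rV (p : 'rV[R]_n -> R) (w : 'rV[R]_n) :
  (forall u v, p (u + v) <= p u + p v) -> (forall t u, 0 < t -> p (t *: u) = t * p u) ->
  (forall u, 0 <= p u) -> 1 <= p w ->
  exists nu : 'rV[R]_n, dotp nu w = 1 /\ forall z, dotp nu z <= p z.
Proof.
move=> pD pZ p_ge0 pw1.
pose S0 := [set (0 : 'rV[R]_n)].
have sS0 : subspace S0.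
  by split=> //; split=> [u v -> ->|t u ->]; rewrite ?addr0 ?scaler0.
have lf0 : linear_on S0 (fun _ => 0).
  by split=> *; rewrite ?addr0 ?mulr0.
have nS0w : ~ S0 w.
  by move=> w0; move: pw1; rewrite /S0 /= in w0; rewrite w0; have := pZ 2 0; rewrite scaler0; lra.
have [g0 [lg0 _ g0w g0p]] : exists g, [/\ linear_on (adjoin S0 w) g,
    (forall u, S0 u -> g u = 0), g w = 1 & forall u, adjoin S0 w u -> g u <= p u].
  apply: extend_with_value => // v ->; rewrite add0r ?sub0r;
  by have := p_ge0 (- w); lra.
pose es : seq 'rV[R]_n := [seq 'e_j | j <- enum 'I_n].
have sS1 := adjoin_subspace w sS0.
have [g [[gD gZ] gg0 gp]] := extend_all pD pZ es sS1 lg0 g0p.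
have all_u u : adjoin_all (adjoin S0 w) es u.
  have [T0 [TD TZ]] := adjoin_all_subspace es sS1.
  rewrite (row_sum_delta u); apply: (big_ind (adjoin_all (adjoin S0 w) es)) => //.
  move=> j _; apply: TZ; apply: adjoin_all_mem => //.
  by apply/mapP; exists j; rewrite ?mem_enum.
have gD' u v : g (u + v) = g u + g v by apply: gD.
have gZ' t u : g (t *: u) = t * g u by apply: gZ.
exists (\row_j g 'e_j); split=> [|z]; rewrite -linear_dotp //.
  by rewrite gg0 //; exact: adjoin_mem.
exact: gp.
Qed.

Lemma open_ball_sub (U : set 'rV[R]_n) x : open U -> U x ->
  exists2 e : R, 0 < e & forall y, `|x - y| < e -> U y.
Proof.
move=> oU Ux; have : nbhs x U by apply: open_nbhs_nbhs; split.
move=> /nbhs_ballP [e e0 H]; exists e => // y xy; apply: H.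
by rewrite -ball_normE /=.
Qed.

Lemma convex_comb (U : set 'rV[R]_n) a b (l : R) : convex_set U ->
  0 <= l -> l <= 1 -> U a -> U b -> U (l *: a + (1 - l) *: b).
Proof.
move=> cU l0 l1 Ua Ub.
by have := cU a b (Itv01 l0 l1) (mem_set Ua) (mem_set Ub); rewrite inE.
Qed.

Lemma separation (Om : set 'rV[R]_n) x y : open Om -> convex_set Om -> Om x -> ~ Om y ->
  exists nu : 'rV[R]_n, dotp nu (y - x) = 1 /\ forall z, Om z -> dotp nu (z - x) < 1.
Proof.
move=> oO cO Ox Oy; pose U := [set u | Om (x + u)].
have U_open u : U u -> exists2 e : R, 0 < e & forall y, `|u - y| < e -> U y.
  move=> Uu; have [e e0 He] := open_ball_sub oO Uu; exists e => // y' h.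
  by apply: He; rewrite /U opprD addrACA subrr add0r.
have U_convex a b (l : R) : 0 <= l -> l <= 1 -> U a -> U b -> U (l *: a + (1 - l) *: b).
  move=> l0 l1 Ua Ub; have := convex_comb cO l0 l1 Ua Ub.
  by rewrite /U /= !scalerDr addrACA -scalerDl [l + _]addrC subrK scale1r.
have U0 : U 0 by rewrite /U /= addr0.
have [nu [nu1 nup]] : exists nu : 'rV[R]_n,
    dotp nu (y - x) = 1 /\ forall z, dotp nu z <= gauge U z.
  apply: hahn_banach_rV; [exact: gaugeD | exact: gaugeZ | exact: gauge_ge0 |].
  by apply: gauge_out => //; rewrite /U /= addrC subrK.
exists nu; split=> // z Oz; apply: le_lt_trans (nup _) _; apply: gauge_in => //.
by rewrite /U /= addrC subrK.
Qed.

End Separation.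

(* Monotonicity of the (iterated, then spherical) integrals of nonnegative
   functions; through the supremum over simple functions it needs no
   measurability. *)
Section Monotonicity.
Variable R : realType.
Local Open Scope ereal_scope.

Lemma lebesgue_int_le (f g : R -> \bar R) : (forall t, 0 <= f t) -> (forall t, f t <= g t) ->
  \int[@lebesgue_measure R]_(t in [set: R]) f t <=
  \int[@lebesgue_measure R]_(t in [set: R]) g t.
Proof.
move=> f0 fg; have g0 t : 0 <= g t by apply: le_trans (fg t).
rewrite !ge0_integralTE //; apply: ereal_sup_le => _ [h hf <-]; exists h => //.
by move=> t; apply: le_trans (fg t).
Qed.

Lemma iter_int_ge0 k (f : (nat -> R) -> \bar R) : (forall v, 0 <= f v) -> 0 <= iter_int k f.
Proof.
elim: k f => [|k IH] f f0 /=; first exact: f0.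
by apply: integral_ge0 => t _; apply: IH.
Qed.

Lemma iter_int_le k (f g : (nat -> R) -> \bar R) : (forall v, 0 <= f v) ->
  (forall v, f v <= g v) -> iter_int k f <= iter_int k g.
Proof.
elim: k f g => [|k IH] f g f0 fg /=; first exact: fg.
by apply: lebesgue_int_le => t; [exact: iter_int_ge0 | exact: IH].
Qed.

Lemma sphere_int_ge0 n (f : 'rV[R]_n -> \bar R) : (forall v, 0 <= f v) -> 0 <= sphere_int f.
Proof.
move=> f0; apply: mule_ge0; first by apply: iter_int_ge0 => v; exact: mule_ge0.
by rewrite lee_fin invr_ge0 fine_ge0 // iter_int_ge0.
Qed.

Lemma sphere_int_le n (f g : 'rV[R]_n -> \bar R) : (forall v, 0 <= f v) ->
  (forall v, f v <= g v) -> sphere_int f <= sphere_int g.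
Proof.
move=> f0 fg; apply: lee_wpmul2r; first by rewrite lee_fin invr_ge0 fine_ge0 // iter_int_ge0.
apply: iter_int_le => v; first exact: mule_ge0.
exact: lee_wpmul2l.
Qed.

End Monotonicity.

Section Polars.
Variables (R : realType) (n m : nat) (a : multiidx n m -> R).
Hypothesis m_gt0 : (0 < m)%N.
Hypothesis H_pos : forall xi : 'rV[R]_n, xi != 0 -> 0 < Hsym a xi.

Lemma FH_gt0 w : w != 0 -> 0 < FH a w.
Proof. by move=> w0; rewrite /FH powR_gt0 // H_pos. Qed.

Lemma FH_exp w : w != 0 -> FH a w ^+ (2 * m) = Hsym a w.
Proof.
move=> w0; rewrite /FH -powR_mulrn ?powR_ge0 // -powRrM mulVf ?powRr1 //.
  exact/ltW/H_pos.
by rewrite pnatr_eq0 muln_eq0 negb_or /= -lt0n m_gt0.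
Qed.

Definition coef_norm := \sum_(al : multiidx n m | (\sum_(i < n) (al i : nat) == 2 * m)%N)
  `|a al|.

Lemma coef_norm_ge0 : 0 <= coef_norm.
Proof. exact: sumr_ge0. Qed.

Lemma Hsym_le w : Hsym a w <= coef_norm * Num.sqrt (dotp w w) ^+ (2 * m).
Proof.
set s := Num.sqrt _.
apply: le_trans (ler_norm _) _; apply: le_trans (ler_norm_sum _ _ _) _.
rewrite /coef_norm mulr_suml; apply: ler_sum => al /eqP hal.
rewrite normrM ler_wpM2l // normr_prod.
have -> : s ^+ (2 * m) = \prod_i s ^+ (al i : nat) by rewrite prodrXr hal.
apply: ler_prod => i _; rewrite normrX exprn_ge0 //=.
by apply: lerXn2r; rewrite ?nnegrE ?sqrtr_ge0 ?coord_le_norm.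
Qed.

Lemma FH_le w : w != 0 -> FH a w <= (1 + coef_norm) * Num.sqrt (dotp w w).
Proof.
move=> w0; have A0 := coef_norm_ge0; have m2 : (0 < 2 * m)%N by rewrite muln_gt0.
rewrite -(ler_pXn2r m2) ?nnegrE ?mulr_ge0 ?sqrtr_ge0 ?addr_ge0 //; last exact/ltW/FH_gt0.
rewrite FH_exp // exprMn; apply: le_trans (Hsym_le w) _.
apply: ler_wpM2r; first by rewrite exprn_ge0 ?sqrtr_ge0.
by apply: le_trans (ler_eXnr m2 _); lra.
Qed.

(* The sup defining F_H^* is either unbounded (value 0) or above w.w / F_H(w). *)
Lemma FHstar_cases w : w != 0 ->
  FHstar a w = 0 \/ dotp w w / FH a w <= FHstar a w.
Proof.
move=> w0; rewrite /FHstar; set E := [set _ | _ in _].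
have [ub|nub] := pselect (has_ubound E); first by right; apply: ub_le_sup => //; exists w.
by left; apply: sup_out => -[].
Qed.

Lemma FHstar_ge0 w : w != 0 -> 0 <= FHstar a w.
Proof.
move=> w0; case: (FHstar_cases w0) => [->//|]; apply: le_trans.
by rewrite divr_ge0 ?dotp_ge0 // ltW // FH_gt0.
Qed.

Lemma FHstarstar_bounded xi :
  has_ubound [set dotp xi om / FHstar a om | om in [set om | om != 0]].
Proof.
have A0 := coef_norm_ge0; pose L := \sum_i `|xi ord0 i|.
have L0 : 0 <= L by apply: sumr_ge0.
exists (L * (1 + coef_norm)) => _ [w /= w0 <-].
case: (FHstar_cases w0) => [->|Fs_ge]; first by rewrite invr0 mulr0 mulr_ge0 //; lra.
have F0 := FH_gt0 w0.
have Fs0 : 0 < FHstar a w by apply: lt_le_trans Fs_ge; rewrite divr_gt0 ?dotp_gt0.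
rewrite ler_pdivrMr //; apply: le_trans (_ : _ <= L * (1 + coef_norm) * (dotp w w / FH a w)) _.
  rewrite mulrA ler_pdivlMr //; apply: le_trans (ler_norm _) _.
  rewrite normrM (gtr0_norm F0); set s := Num.sqrt (dotp w w).
  have -> : dotp w w = s * s by rewrite -expr2 sqr_sqrtr // dotp_ge0.
  apply: le_trans (_ : _ <= L * s * ((1 + coef_norm) * s)) _.
    by apply: ler_pM; rewrite ?normr_ge0 ?(ltW F0) ?dotp_le_norm ?FH_le.
  by rewrite !mulrA (mulrAC L s).
by rewrite ler_wpM2l // mulr_ge0 //; lra.
Qed.

Lemma FHstarstar_ge xi om : om != 0 -> dotp xi om / FHstar a om <= FHstarstar a xi.
Proof. by move=> om0; apply: ub_le_sup; [exact: FHstarstar_bounded | exists om]. Qed.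

End Polars.

Section Estimate.
Variables (R : realType) (n m : nat) (a : multiidx n m -> R).
Hypothesis m_gt0 : (0 < m)%N.

Lemma even_pow_ge0 (r : R) : 0 <= r ^+ (2 * m).
Proof. by rewrite exprM exprn_ge0 // sqr_ge0. Qed.

Lemma even_powN (r : R) : (- r) ^+ (2 * m) = r ^+ (2 * m).
Proof. by rewrite !exprM sqrrN. Qed.

Lemma integrand_ge0 Om x w : (0 <= integrand a Om x w)%E.
Proof.
rewrite /integrand; case: (d_dir Om x w) => [r| |] //.
by rewrite lee_fin invr_ge0 even_pow_ge0.
Qed.

Lemma d_dir_le (Om : set 'rV[R]_n) x w s : open Om -> Om x -> w != 0 ->
  ~ Om (x + s *: w) -> exists r, [/\ d_dir Om x w = r%:E, 0 < r & r <= `|s|].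
Proof.
move=> oO Ox w0 ns; have [e e0 He] := open_ball_sub oO Ox.
have up : (d_dir Om x w <= `|s|%:E)%E by apply: ereal_inf_lbound; exists s.
have lo : ((e / `|w|)%:E <= d_dir Om x w)%E.
  apply: le_ereal_inf_tmp => _ [s' /= ns' <-].
  rewrite lee_fin ler_pdivrMr ?normr_gt0 // leNgt; apply/negP => h; apply: ns'.
  by apply: He; rewrite opprD addrA subrr sub0r normrN normrZ.
move: up lo; case: (d_dir Om x w) => [r| |] //= up lo; exists r; split => //.
by rewrite lee_fin in lo; apply: lt_le_trans lo; rewrite divr_gt0 ?normr_gt0.
Qed.

(* Pointwise lower bound of the integrand: if Om lies in the half-space
   nu.(z - x) < 1, then d_w(x) <= 1 / |nu.w|. *)
Lemma integrand_ge (Om : set 'rV[R]_n) x nu w : open Om -> Om x ->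
  (forall z, Om z -> dotp nu (z - x) < 1) ->
  ((dotp nu w ^+ (2 * m) / FHstar a w ^+ (2 * m))%:E <= integrand a Om x w)%E.
Proof.
move=> oO Ox nu_half.
have m2 : (2 * m)%N != 0%N by rewrite muln_eq0 /= -lt0n m_gt0.
have [nw0|nw0] := eqVneq (dotp nu w) 0.
  by rewrite nw0 expr0n (negbTE m2) mul0r integrand_ge0.
have w0 : w != 0 by apply: contra nw0 => /eqP ->; rewrite dotp0r.
have exit : ~ Om (x + (dotp nu w)^-1 *: w).
  by move=> /nu_half; rewrite addrAC subrr add0r dotpZr mulVf //; lra.
have [r [dE r0 r_le]] := d_dir_le oO Ox w0 exit.
rewrite /integrand dE lee_fin; set F := FHstar a w.
have [->|F0] := eqVneq F 0.
  by rewrite expr0n (negbTE m2) invr0 mulr0 invr_ge0 even_pow_ge0.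
have Fk0 : 0 < F ^+ (2 * m).
  by rewrite lt_def even_pow_ge0 andbT expf_eq0 negb_and F0 orbT.
have nur : dotp nu w ^+ (2 * m) * r ^+ (2 * m) <= 1.
  rewrite -exprMn exprM; apply: exprn_ile1; first exact: sqr_ge0.
  rewrite -[leLHS]ger0_norm ?sqr_ge0 // normrX; apply: exprn_ile1; first exact: normr_ge0.
  rewrite normrM (gtr0_norm r0); apply: le_trans (ler_wpM2l (normr_ge0 _) r_le) _.
  by rewrite normrV ?unitfE // mulfV ?normr_eq0.
rewrite exprMn invfM [leLHS]mulrC ler_pM2l ?invr_gt0 // -[leRHS]div1r.
by rewrite ler_pdivlMr // exprn_gt0.
Qed.

Hypothesis H_pos : forall xi : 'rV[R]_n, xi != 0 -> 0 < Hsym a xi.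

Lemma muH_le xi (t j : R) : 0 < t -> t^-1 <= FHstarstar a xi ->
  (sphere_int (fun om => (dotp xi om ^+ (2 * m) / FHstar a om ^+ (2 * m))%:E) <= j%:E)%E ->
  muH a <= j * t ^+ (2 * m).
Proof.
move=> t0 t_le J_le; rewrite /muH; set S := [set c | _].
have j0 : 0 <= j.
  rewrite -lee_fin; apply: le_trans J_le; apply: sphere_int_ge0 => om.
  by rewrite lee_fin mulr_ge0 ?invr_ge0 ?even_pow_ge0.
have [Sn|S0] := pselect (S !=set0); last first.
  have -> : S = set0 by apply/seteqP; split => // c Sc; apply: S0; exists c.
  by rewrite sup0 mulr_ge0 // even_pow_ge0.
apply: ge_sup => // c Sc; have [c0|c0] := lerP c 0.
  by apply: le_trans c0 _; rewrite mulr_ge0 // even_pow_ge0.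
have := le_trans (Sc xi) J_le; rewrite lee_fin => cF.
have F0 : 0 <= FHstarstar a xi by apply: le_trans t_le; rewrite invr_ge0 ltW.
suff : c / t ^+ (2 * m) <= j by rewrite ler_pdivrMr ?exprn_gt0.
apply: le_trans cF; rewrite ler_wpM2l ?(ltW c0) // -exprVn.
by apply: lerXn2r; rewrite ?nnegrE ?invr_ge0 ?(ltW t0).
Qed.

(* The key estimate for one boundary point y: the supporting hyperplane at y
   gives the direction xi = -nu with nu.(y - x) = 1. *)
Lemma boundary_estimate (Om : set 'rV[R]_n) x y j : open Om -> convex_set Om -> Om x ->
  ~ Om y -> sphere_int (integrand a Om x) = j%:E -> 0 < FHstar a (x - y) ->
  muH a <= j * FHstar a (x - y) ^+ (2 * m).
Proof.
move=> oO cO Ox Oy J_eq t0.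
have [nu [nu1 nu_half]] := separation oO cO Ox Oy.
apply: (muH_le (xi := - nu)) => //.
  have xy0 : x - y != 0 by rewrite subr_eq0; apply: contraPneq Oy => <-.
  apply: le_trans (FHstarstar_ge m_gt0 H_pos _ xy0).
  by rewrite dotpNl -dotpNr opprB nu1 div1r.
rewrite -J_eq; apply: sphere_int_le => w.
  by rewrite lee_fin mulr_ge0 ?invr_ge0 ?even_pow_ge0.
by rewrite dotpNl even_powN; exact: integrand_ge.
Qed.

End Estimate.

Lemma root_pow (R : realType) (z : R) k : (0 < k)%N -> 0 <= z -> (z `^ (k%:R^-1)) ^+ k = z.
Proof.
move=> k0 z0; rewrite -powR_mulrn ?powR_ge0 // -powRrM mulVf ?powRr1 //.
by rewrite pnatr_eq0 -lt0n.
Qed.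

(* Passing to the infimum: mu <= j t^k for all positive t in T gives
   mu / (inf T)^k <= j (the left-hand side is 0 when inf T = 0). *)
Lemma inf_pow_bound (R : realType) (T : set R) (mu j : R) k : (0 < k)%N -> T !=set0 ->
  (forall t, T t -> 0 <= t) -> 0 <= j -> (forall t, T t -> 0 < t -> mu <= j * t ^+ k) ->
  mu / (inf T) ^+ k <= j.
Proof.
move=> k0 Tn T0 j0 hT.
have d0 : 0 <= inf T by apply: lb_le_inf.
have [->|dn0] := eqVneq (inf T) 0; first by rewrite expr0n (negbTE (lt0n_neq0 k0)) invr0 mulr0.
have dp : 0 < inf T by rewrite lt_def dn0 d0.
have Tpos t : T t -> 0 < t by move=> Tt; apply: lt_le_trans dp _; apply: ge_inf => //; exists 0.
have dk : 0 < inf T ^+ k by rewrite exprn_gt0.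
rewrite ler_pdivrMr // leNgt; apply/negP => hlt; have [t0 Tt0] := Tn.
have [jz|jp] := eqVneq j 0.
  by have := hT _ Tt0 (Tpos _ Tt0); move: hlt; rewrite jz !mul0r => h1 h2; lra.
have jp' : 0 < j by rewrite lt_def jp j0.
have q0 : 0 <= mu / j by rewrite divr_ge0 // (le_trans _ (ltW hlt)) // mulr_ge0 // ltW.
set u := (mu / j) `^ (k%:R^-1).
have uk : u ^+ k = mu / j by apply: root_pow.
have u0 : 0 <= u by apply: powR_ge0.
have du : inf T < u.
  rewrite ltNge; apply/negP => ud.
  have : u ^+ k <= inf T ^+ k by apply: lerXn2r; rewrite ?nnegrE.
  by rewrite uk ler_pdivrMr // mulrC => h; lra.
have [t Tt tu] := inf_lt Tn du.
have : t ^+ k < u ^+ k by rewrite ltr_pXn2r ?nnegrE ?(ltW (Tpos _ Tt)).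
by rewrite uk ltr_pdivlMr // mulrC => h; have := hT _ Tt (Tpos _ Tt); lra.
Qed.

Lemma bdry_notin (R : realType) n (Om : set 'rV[R]_n) y : open Om -> bdry Om y -> ~ Om y.
Proof.
move=> oO [_ cy] Oy; have [z [nz Oz]] := cy Om (open_nbhs_nbhs (conj oO Oy)).
exact: nz.
Qed.

Theorem mainTheorem5 (R : realType) (n m : nat) (a : multiidx n m -> R)
    (Omega : set 'rV[R]_n) :
  (0 < m)%N ->
  (forall xi : 'rV[R]_n, xi != 0 -> 0 < Hsym a xi) ->
  open Omega -> convex_set Omega -> bdry Omega !=set0 ->
  forall x : 'rV[R]_n, Omega x ->
    ((muH a / dH a Omega x ^+ (2 * m))%:E <=
     sphere_int (integrand a Omega x))%E.
Proof.
move=> m_gt0 H_pos oO cO [y0 y0_bd] x Ox.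
have J0 : (0 <= sphere_int (integrand a Omega x))%E.
  by apply: sphere_int_ge0 => w; exact: integrand_ge0.
case J_eq: (sphere_int (integrand a Omega x)) J0 => [j| |] //= J0; last by rewrite leey.
rewrite lee_fin in J0 *; apply: inf_pow_bound => //; first by rewrite muln_gt0.
- by exists (FHstar a (x - y0)), y0.
- move=> _ [y y_bd <-]; apply: FHstar_ge0 => //.
  by rewrite subr_eq0; apply: contraPneq (bdry_notin oO y_bd) => <-.
- move=> _ [y y_bd <-] t0.
  exact: boundary_estimate (bdry_notin oO y_bd) J_eq t0.
Qed.
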